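(* Let $(N,\langle\cdot,\cdot\rangle,\varphi)$ be a modified $H$-type group (see context) whose metric $\langle\cdot,\cdot\rangle$ is a nilsoliton. Then every trivial central extension of $N$ also admits a nilsoliton; that is, for every finite-dimensional real vector space $\mathfrak m$, the simply connected Lie group $\bar N$ with Lie algebra $\bar{\mathfrak n}=\mathfrak n\oplus\mathfrak m$, bracket $[u+a,w+b]=[u,w]$ ($u,w\in\mathfrak n$, $a,b\in\mathfrak m$), admits a left-invariant pseudo-Riemannian metric with nondegenerate center that is a nilsoliton.
   Context: Let $N$ be a 2-step nilpotent real Lie group with Lie algebra $\mathfrak n$, Lie bracket $[\cdot,\cdot]$ and center $\mathfrak z$, endowed with a left-invariant pseudo-Riemannian metric $\langle\cdot,\cdot\rangle$ for which $\mathfrak z$ is nondegenerate. Put $\mathfrak v=\mathfrak z^\perp$. For $z\in\mathfrak z$ define $j(z)\in\mathrm{End}(\mathfrak v)$ by $\langle [x,y],z\rangle=\langle y,j(z)x\rangle$ for all $x,y\in\mathfrak v$. Given a quadratic form $\varphi$ on $\mathfrak z$, $(N,\langle\cdot,\cdot\rangle,\varphi)$ is a modified $H$-type group if $j(z)^2=-\varphi(z)\,\mathrm{Id}_{\mathfrak v}$ for all $z\in\mathfrak z$. A left-invariant metric on a 2-step nilpotent Lie group with Lie algebra $\mathfrak g$ is a nilsoliton if there is $c\in\mathbb R$ such that $\mathrm{Rc}+c\,\mathrm{Id}_{\mathfrak g}$ is a derivation of $\mathfrak g$, where the Ricci operator $\mathrm{Rc}$ is defined by $\langle\mathrm{Rc}\,u,w\rangle=\mathrm{Ric}(u,w)$.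 *)

(* A real finite-dimensional Lie algebra of dimension n is
   modelled as the coordinate space 'rV[R]_n (R : realType) with a bracket;
   a left-invariant pseudo-Riemannian metric is a symmetric invertible
   Gram matrix g.  All Riemannian quantities of a left-invariant metric are
   computed algebraically on the Lie algebra (Koszul formula). *)
From HB Require Import structures.
From mathcomp Require Import all_boot all_order all_algebra.
From mathcomp Require Import reals.
Set Implicit Arguments. Unset Strict Implicit. Unset Printing Implicit Defensive.
Import Order.TTheory GRing.Theory Num.Theory.
Local Open Scope ring_scope.

Section LieDefs.
Variable R : realType.
Variable n : nat.
Notation V := 'rV[R]_n.

Definition is_bilinear (br : V -> V -> V) : Prop :=
  (forall (a : R) (x y z : V), br (a *: x + y) z = a *: br x z + br y z) /\
  (forall (a : R) (x y z : V), br x (a *: y + z) = a *: br x y + br x z).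

Definition is_lie_bracket (br : V -> V -> V) : Prop :=
  is_bilinear br /\
  (forall x, br x x = 0) /\
  (forall x y z, br x (br y z) + br y (br z x) + br z (br x y) = 0).

Definition two_step_nilpotent (br : V -> V -> V) : Prop :=
  (forall x y z, br (br x y) z = 0) /\ (exists x y, br x y != 0).

Definition ip (g : 'M[R]_n) (u w : V) : R := (u *m g *m w^T) 0 0.

Definition is_metric (g : 'M[R]_n) : Prop := g^T = g /\ g \in unitmx.

Definition center (br : V -> V -> V) (x : V) : Prop := forall y, br x y = 0.

Definition center_nondegenerate (br : V -> V -> V) (g : 'M[R]_n) : Prop :=
  forall z, center br z -> (forall w, center br w -> ip g z w = 0) -> z = 0.

Definition vpart (br : V -> V -> V) (g : 'M[R]_n) (x : V) : Prop :=
  forall z, center br z -> ip g x z = 0.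

Definition evec (j : 'I_n) : V := delta_mx 0 j.

(* Levi-Civita connection via Koszul formula:
   2 <nabla_x y, z> = <[x,y],z> - <[y,z],x> + <[z,x],y> *)
Definition koszul (br : V -> V -> V) (g : 'M[R]_n) (x y : V) : V :=
  \row_j (ip g (br x y) (evec j) - ip g (br y (evec j)) x
          + ip g (br (evec j) x) y).

Definition nabla (br : V -> V -> V) (g : 'M[R]_n) (x y : V) : V :=
  (2%:R^-1 *: koszul br g x y) *m invmx g.

Definition curv (br : V -> V -> V) (g : 'M[R]_n) (x y z : V) : V :=
  nabla br g x (nabla br g y z) - nabla br g y (nabla br g x z)
  - nabla br g (br x y) z.

Definition ric (br : V -> V -> V) (g : 'M[R]_n) (u w : V) : R :=
  \sum_(i < n) (curv br g (evec i) u w) 0 i.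

(* Ricci operator: <Rc u, w> = Ric(u,w) *)
Definition ricci_op (br : V -> V -> V) (g : 'M[R]_n) (u : V) : V :=
  (\row_j ric br g u (evec j)) *m invmx g.

Definition is_derivation (br : V -> V -> V) (D : V -> V) : Prop :=
  (forall (a : R) (x y : V), D (a *: x + y) = a *: D x + D y) /\
  (forall x y, D (br x y) = br (D x) y + br x (D y)).

Definition nilsoliton (br : V -> V -> V) (g : 'M[R]_n) : Prop :=
  exists c : R, is_derivation br (fun u => ricci_op br g u + c *: u).

(* modified H-type: there is a quadratic form phi on the center such that
   for every central z, the map j(z) : v -> v defined by
   <[x,y],z> = <y, j(z) x> (x,y in v) satisfies j(z)^2 = -phi(z) Id_v.
   j(z) is represented by a matrix J (acting on the right) preserving v;
   its restriction to v is uniquely determined since v is nondegenerate. *)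
Definition modified_H_type (br : V -> V -> V) (g : 'M[R]_n) : Prop :=
  exists Q : 'M[R]_n,
    let phi := fun z : V => (z *m Q *m z^T) 0 0 in
    forall z, center br z ->
      exists J : 'M[R]_n,
        (forall x, vpart br g x -> vpart br g (x *m J)) /\
        (forall x y, vpart br g x -> vpart br g y ->
            ip g (br x y) z = ip g y (x *m J)) /\
        (forall x, vpart br g x -> (x *m J) *m J = - phi z *: x).

End LieDefs.

Definition triv_ext (R : realType) (n k : nat) (br : 'rV[R]_n -> 'rV[R]_n -> 'rV[R]_n)
  (u w : 'rV[R]_(n + k)) : 'rV[R]_(n + k) :=
  row_mx (br (lsubmx u) (lsubmx w)) 0.

From HB Require Import structures.
From mathcomp Require Import all_boot all_order all_algebra.
From mathcomp Require Import reals.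
Import Order.TTheory GRing.Theory Num.Theory.
Local Open Scope ring_scope.

(* Give n (+) m the metric g (+) Id.  As m is central, orthogonal to n and
   never reached by a bracket, the Koszul formula, the connection, the
   curvature and the Ricci tensor of the extension are those of n, extended
   by zero on m.  Hence Rc' + c Id = (Rc + c Id) (+) c Id, and any map of the
   form D (+) A with D a derivation of n is a derivation of n (+) m. *)

Lemma ip0r (R : realType) m (h : 'M[R]_m) u : ip h u 0 = 0.
Proof. by rewrite /ip trmx0 mulmx0 mxE. Qed.

Lemma ip0l (R : realType) m (h : 'M[R]_m) u : ip h 0 u = 0.
Proof. by rewrite /ip !mul0mx mxE. Qed.

Section TrivialExtension.
Variables (R : realType) (n k : nat).
Variable br : 'rV[R]_n -> 'rV[R]_n -> 'rV[R]_n.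
Variable g : 'M[R]_n.
Hypothesis br_bilinear : is_bilinear br.

Notation brE := (@triv_ext R n k br).

Definition ext_metric : 'M[R]_(n + k) := block_mx g 0 0 1%:M.

Lemma bracket0r x : br x 0 = 0.
Proof.
by have := br_bilinear.2 (-1) x 0 0; rewrite !scaleN1r !addNr.
Qed.

Lemma bracket0l x : br 0 x = 0.
Proof.
by have := br_bilinear.1 (-1) 0 0 x; rewrite !scaleN1r !addNr.
Qed.

Lemma evec_lshift (j : 'I_n) :
  @evec R _ (lshift k j) = row_mx (@evec R _ j) 0.
Proof. exact: delta_mx_lshift. Qed.

Lemma evec_rshift (j : 'I_k) :
  @evec R _ (rshift n j) = row_mx 0 (delta_mx 0 j).
Proof. exact: delta_mx_rshift. Qed.

Lemma ip_ext_metric u a w b :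
  ip ext_metric (row_mx u a) (row_mx w b) = ip g u w + (a *m b^T) 0 0.
Proof.
rewrite /ip tr_row_mx mul_row_block !mulmx0 addr0 add0r mulmx1 mul_row_col.
by rewrite !mxE.
Qed.

Lemma ip_ext_metric_bracket x y w :
  ip ext_metric (brE x y) w = ip g (br (lsubmx x) (lsubmx y)) (lsubmx w).
Proof. by rewrite -[w]hsubmxK ip_ext_metric row_mxKl mul0mx mxE addr0. Qed.

Hypothesis g_metric : is_metric g.

Lemma ext_metric_mulmx_inv :
  ext_metric *m block_mx (invmx g) 0 0 1%:M = 1%:M.
Proof.
rewrite mulmx_block !mulmx0 !mul0mx !addr0 !add0r mulmx1 mulmxV ?g_metric.2 //.
by rewrite -scalar_mx_block.
Qed.

Lemma ext_metric_is_metric : is_metric ext_metric.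
Proof.
split; first by rewrite tr_block_mx g_metric.1 !trmx0 trmx1.
exact: (mulmx1_unit ext_metric_mulmx_inv).1.
Qed.

Lemma invmx_ext_metric : invmx ext_metric = block_mx (invmx g) 0 0 1%:M.
Proof.
have [ext_unit _] := mulmx1_unit ext_metric_mulmx_inv.
by rewrite -[RHS](mulKmx ext_unit) ext_metric_mulmx_inv mulmx1.
Qed.

Lemma mul_invmx_ext_metric v :
  row_mx v (0 : 'rV[R]_k) *m invmx ext_metric = row_mx (v *m invmx g) 0.
Proof. by rewrite invmx_ext_metric mul_row_block !mulmx0 !mul0mx !addr0. Qed.

Lemma koszul_triv_ext x y :
  koszul brE ext_metric x y = row_mx (koszul br g (lsubmx x) (lsubmx y)) 0.
Proof.
rewrite -[LHS]hsubmxK; congr row_mx; apply/rowP => j; rewrite !mxE.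
  by rewrite !ip_ext_metric_bracket evec_lshift row_mxKl.
rewrite !ip_ext_metric_bracket evec_rshift row_mxKl bracket0r bracket0l.
by rewrite !ip0l ip0r subrr addr0.
Qed.

Lemma nabla_triv_ext x y :
  nabla brE ext_metric x y = row_mx (nabla br g (lsubmx x) (lsubmx y)) 0.
Proof.
by rewrite /nabla koszul_triv_ext scale_row_mx scaler0 mul_invmx_ext_metric.
Qed.

Lemma curv_triv_ext x y z :
  curv brE ext_metric x y z =
  row_mx (curv br g (lsubmx x) (lsubmx y) (lsubmx z)) 0.
Proof.
rewrite /curv !nabla_triv_ext !row_mxKl /triv_ext.
by rewrite !opp_row_mx !add_row_mx !oppr0 !addr0.
Qed.

Lemma curv0 x y : curv br g x y 0 = 0.
Proof.
have nabla0 a : nabla br g a 0 = 0.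
  have koszul0 : koszul br g a 0 = 0.
    by apply/rowP => j; rewrite !mxE bracket0r bracket0l !ip0l ip0r subrr addr0.
  by rewrite /nabla koszul0 scaler0 mul0mx.
by rewrite /curv !nabla0 subrr subr0.
Qed.

Lemma ric_triv_ext u w : ric brE ext_metric u w = ric br g (lsubmx u) (lsubmx w).
Proof.
rewrite /ric big_split_ord /= [X in _ + X]big1 ?addr0 => [|i _].
  by apply: eq_bigr => i _; rewrite curv_triv_ext row_mxEl evec_lshift row_mxKl.
by rewrite curv_triv_ext row_mxEr mxE.
Qed.

Lemma ricci_op_triv_ext u :
  ricci_op brE ext_metric u = row_mx (ricci_op br g (lsubmx u)) 0.
Proof.
rewrite /ricci_op -mul_invmx_ext_metric; congr (_ *m _).
rewrite -[LHS]hsubmxK; congr row_mx; apply/rowP => j; rewrite !mxE ric_triv_ext.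
  by rewrite evec_lshift row_mxKl.
by rewrite evec_rshift row_mxKl /ric big1 // => i _; rewrite curv0 mxE.
Qed.

End TrivialExtension.

Arguments ext_metric {R n} k g.

Lemma is_derivation_triv_ext (R : realType) (n k : nat)
    (br : 'rV[R]_n -> 'rV[R]_n -> 'rV[R]_n) (D : 'rV[R]_n -> 'rV[R]_n)
    (A : 'M[R]_k) (f : 'rV[R]_(n + k) -> 'rV[R]_(n + k)) :
  is_derivation br D ->
  (forall u, f u = row_mx (D (lsubmx u)) (rsubmx u *m A)) ->
  is_derivation (@triv_ext R n k br) f.
Proof.
move=> [D_linear D_bracket] fE; split=> [a x y | x y]; rewrite !fE.
  rewrite !linearP /= D_linear scale_row_mx add_row_mx.
  by rewrite mulmxDl -scalemxAl.
by rewrite /triv_ext !row_mxKl row_mxKr mul0mx D_bracket add_row_mx addr0.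
Qed.

Lemma center_nondegenerate_triv_ext (R : realType) (n k : nat)
    (br : 'rV[R]_n -> 'rV[R]_n -> 'rV[R]_n) (g : 'M[R]_n) :
  is_bilinear br -> center_nondegenerate br g ->
  center_nondegenerate (@triv_ext R n k br) (ext_metric k g).
Proof.
move=> br_bilinear g_nondeg z z_central z_orth.
have lsub_central w : center br w -> center (@triv_ext R n k br) (row_mx w 0).
  by move=> w_central y; rewrite /triv_ext row_mxKl w_central row_mx0.
have lsubz0 : lsubmx z = 0.
  apply: g_nondeg => [y | w w_central].
    have := congr1 lsubmx (z_central (row_mx y 0)).
    by rewrite /triv_ext !row_mxKl => ->; apply/rowP => j; rewrite !mxE.
  have := z_orth _ (lsub_central w w_central).
  by rewrite -{1}[z]hsubmxK ip_ext_metric trmx0 mulmx0 mxE addr0.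
have rsubz0 : rsubmx z = 0.
  apply/rowP => j.
  have rsub_central : center (@triv_ext R n k br) (row_mx 0 (delta_mx 0 j)).
    by move=> y; rewrite /triv_ext row_mxKl bracket0l ?row_mx0.
  have := z_orth _ rsub_central.
  by rewrite -{1}[z]hsubmxK ip_ext_metric ip0r add0r trmx_delta -colE !mxE.
by rewrite -[z]hsubmxK lsubz0 rsubz0 row_mx0.
Qed.

Theorem corollary4p12 (R : realType) (n : nat)
  (br : 'rV[R]_n -> 'rV[R]_n -> 'rV[R]_n) (g : 'M[R]_n) :
  is_lie_bracket br -> two_step_nilpotent br ->
  is_metric g -> center_nondegenerate br g ->
  modified_H_type br g -> nilsoliton br g ->
  forall k : nat,
    exists g' : 'M[R]_(n + k),
      is_metric g' /\ center_nondegenerate (@triv_ext R n k br) g' /\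
      nilsoliton (@triv_ext R n k br) g'.
Proof.
move=> [br_bilinear _] _ g_metric g_nondeg _ [c Dc] k.
exists (ext_metric k g); split; [|split].
- exact: ext_metric_is_metric.
- exact: center_nondegenerate_triv_ext.
- exists c; apply: (@is_derivation_triv_ext _ _ _ _ _ c%:M _ Dc) => u.
  rewrite ricci_op_triv_ext // -[c *: u]hsubmxK.
  by rewrite !linearZ /= add_row_mx add0r mul_mx_scalar.
Qed.
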